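(* Let $G$ be a group, $k\ge1$ and $s\ge0$ integers such that for every $i<k$ there is a set $A_i\subseteq G$ with $|A_i|\le s$ such that $Z(G/Z_i(G))=C_{G/Z_i(G)}(A_i)$ (where $A_i$ is read via its image in $G/Z_i(G)$). Let $c\in G$. If the set $\{(x_0,\dots,x_k)\in G^{k+1}:[x_0,x_1,\dots,x_k]=c\}$ is $2(s+1)^k$-large in $G^{k+1}$, then $c=1$ and $G$ is nilpotent of class at most $k$.
   Context: $[a,b]=a^{-1}b^{-1}ab$ and commutators are left-normed: $[x_0,x_1,\dots,x_{j+1}]=[[x_0,\dots,x_j],x_{j+1}]$. $Z_i(G)$ denotes the $i$-th term of the upper central series ($Z_0(G)=1$, $Z_{i+1}(G)/Z_i(G)=Z(G/Z_i(G))$). A subset $X$ of a group $K$ is $m$-large in $K$ if the intersection of any $m$ left translates $a_1X\cap\dots\cap a_mX$ ($a_i\in K$) is non-empty. *)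

From HB Require Import structures.
From mathcomp Require Import all_boot monoid.
Set Implicit Arguments. Unset Strict Implicit. Unset Printing Implicit Defensive.
Local Open Scope group_scope.

Fixpoint lcomm_nat (G : groupType) (x : nat -> G) (n : nat) : G :=
  match n with
  | 0 => x 0%N
  | n'.+1 => commg (lcomm_nat x n') (x n)
  end.

Definition lcomm (G : groupType) (k : nat) (x : 'I_k.+1 -> G) : G :=
  lcomm_nat (fun n => x (inord n)) k.

(* Membership in the i-th term Z_i(G) of the upper central series:
   Z_0 = 1, and x Z_i is central in G/Z_i iff [x,y] \in Z_i for all y. *)
Fixpoint upper_central (G : groupType) (i : nat) (x : G) : Prop :=
  match i with
  | 0 => x = 1
  | i'.+1 => forall y : G, upper_central i' (commg x y)
  end.

Definition in_ltranslate (G : groupType) (k : nat) (a : 'I_k.+1 -> G)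
  (X : ('I_k.+1 -> G) -> Prop) (y : 'I_k.+1 -> G) : Prop :=
  X (fun i => (a i)^-1 * y i).

Definition large_pow (G : groupType) (k m : nat)
  (X : ('I_k.+1 -> G) -> Prop) : Prop :=
  forall a : 'I_m -> ('I_k.+1 -> G),
    exists y : 'I_k.+1 -> G, forall j : 'I_m, in_ltranslate (a j) X y.

(* Fix g in G.  Largeness, applied to the 2(s+1)^k translates t^-1 X of
   X = {x | [x_0, ..., x_k] = c}, where t = (t_0, ..., t_k) with t_0 in {1, g}
   and t_n in {1} u A_(k-n) for n >= 1, gives y such that
   [t_0 y_0, ..., t_k y_k] = c for all such t.  Write w_m for the partial
   commutator [t_0 y_0, ..., t_m y_m].  Descending on m, all values of w_(k-j)
   are congruent modulo Z_j(G): since [w, a y] = [w, y] [w, a]^y, changing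
   t_(k-j) from 1 to a in A_j shows that [w_(k-j-1), a] lies in Z_j(G) for
   every a in A_j, hence w_(k-j-1) lies in Z_(j+1)(G).  For j = k this says
   y_0 = g y_0 modulo Z_k(G), i.e. g lies in Z_k(G).  So G = Z_k(G), and then
   c = [y_0, ..., y_k] = 1. *)

From HB Require Import structures.
From mathcomp Require Import all_boot monoid.
Set Implicit Arguments. Unset Strict Implicit. Unset Printing Implicit Defensive.
Local Open Scope group_scope.

Section UpperCentralSeries.
Variable G : groupType.
Implicit Types x y z : G.

Lemma commMgJ x y z : [~ x * y, z] = [~ x, z] ^ y * [~ y, z].
Proof. by rewrite /commg /conjg !invgM !mulgA !mulgK. Qed.

Lemma commgMJ x y z : [~ x, y * z] = [~ x, z] * [~ x, y] ^ z.
Proof. by rewrite /commg /conjg !invgM !mulgA !mulgK. Qed.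

Lemma commVgJ x y : [~ x^-1, y] = ([~ x, y] ^ x^-1)^-1.
Proof. by rewrite /commg /conjg !invgM !invgK !mulgA !mulgK. Qed.

Lemma commJg x y z : [~ x ^ z, y] = [~ x, y ^ z^-1] ^ z.
Proof. by rewrite conjRg conjgKV. Qed.

Lemma upper_centralJ i x z : upper_central i x -> upper_central i (x ^ z).
Proof.
elim: i x z => [|i IHi] x z /=; first by move->; rewrite conj1g.
by move=> Zx y; rewrite commJg; apply: IHi.
Qed.

Lemma upper_centralV i x : upper_central i x -> upper_central i x^-1.
Proof.
elim: i x => [|i IHi] x /=; first by move->; rewrite invg1.
by move=> Zx y; rewrite commVgJ; apply/IHi/upper_centralJ.
Qed.

Lemma upper_centralM i x y :
  upper_central i x -> upper_central i y -> upper_central i (x * y).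
Proof.
elim: i x y => [|i IHi] x y /=; first by move=> -> ->; rewrite mulg1.
by move=> Zx Zy z; rewrite commMgJ; apply: IHi; first apply: upper_centralJ.
Qed.

Lemma eq_lcomm_nat (x x' : nat -> G) n :
  (forall i, i <= n -> x i = x' i) -> lcomm_nat x n = lcomm_nat x' n.
Proof.
elim: n => [|n IHn] eq_x /=; first exact: eq_x.
by rewrite eq_x // IHn // => i le_in; apply/eq_x/leqW.
Qed.

Lemma upper_central_lcomm_nat (x : nat -> G) n d :
  upper_central (n + d) (x 0) -> upper_central d (lcomm_nat x n).
Proof.
elim: n d => [|n IHn] d //= Zx0.
by apply: (IHn d.+1); rewrite addnS.
Qed.

End UpperCentralSeries.

Definition update (T : Type) (x : nat -> T) (n : nat) (v : T) : nat -> T :=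
  fun i => if i == n then v else x i.

Definition on_grid (G : groupType) (k : nat) (T : nat -> seq G) (X0 : seq G)
    (y x : nat -> G) : Prop :=
  x 0 \in X0 /\ forall n, 0 < n <= k -> x n / y n \in T n.

Section CommutatorGrid.
Variables (G : groupType) (k : nat) (A : nat -> seq G) (X0 : seq G).
Variables (y : nat -> G) (c : G).
Hypothesis center_A : forall j, j < k -> forall x,
  (forall a, a \in A j -> upper_central j [~ x, a]) -> upper_central j.+1 x.
Local Notation grid := (on_grid k (fun n => 1 :: A (k - n)) X0 y).
Hypothesis grid_lcomm : forall x, grid x -> lcomm_nat x k = c.

Lemma lcomm_nat_update (x : nat -> G) n v :
  lcomm_nat (update x n.+1 v) n.+1 = [~ lcomm_nat x n, v].
Proof.
rewrite /= /update eqxx; congr commg; apply: eq_lcomm_nat => i le_in.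
by rewrite ltn_eqF.
Qed.

Lemma on_grid_update x n v :
  grid x -> 0 < n <= k -> v / y n \in 1 :: A (k - n) -> grid (update x n v).
Proof.
move=> [x0 xT] /andP[n_gt0 _] Tv; rewrite /update; split.
  by rewrite eq_sym gtn_eqF.
by move=> m m_k; case: eqP => [->|_]; last exact: xT.
Qed.

Lemma grid_lcomm_central j : j < k ->
  (forall x x', grid x -> grid x' ->
     upper_central j ((lcomm_nat x (k - j))^-1 * lcomm_nat x' (k - j))) ->
  forall x, grid x -> upper_central j.+1 (lcomm_nat x (k - j.+1)).
Proof.
move=> lt_jk congr_j x gx; set n := k - j.+1.
have kj : k - j = n.+1 by rewrite /n subnS prednK // subn_gt0.
have kn : k - n.+1 = j by rewrite -kj subKn // ltnW.
have n_k : 0 < n.+1 <= k by rewrite -kj subn_gt0 lt_jk leq_subr.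
apply: (center_A lt_jk) => a Aa.
have g1 : grid (update x n.+1 (y n.+1)).
  by apply: on_grid_update; rewrite ?mulgV ?mem_head.
have ga : grid (update x n.+1 (a * y n.+1)).
  by apply: on_grid_update; rewrite ?mulgK // kn inE Aa orbT.
have := congr_j _ _ g1 ga; rewrite kj !lcomm_nat_update commgMJ mulKg.
by move/(upper_centralJ (y n.+1)^-1); rewrite conjgK.
Qed.

Lemma grid_lcomm_congr j : j <= k -> forall x x', grid x -> grid x' ->
  upper_central j ((lcomm_nat x (k - j))^-1 * lcomm_nat x' (k - j)).
Proof.
elim: j => [|j IHj] le_jk x x' gx gx'.
  by rewrite subn0 !grid_lcomm //= mulVg.
have step := grid_lcomm_central le_jk (IHj (ltnW le_jk)).
by apply: upper_centralM; [apply: upper_centralV|]; apply: step.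
Qed.

End CommutatorGrid.

Lemma large_pow_fin (G : groupType) (k m : nat) (X : ('I_k.+1 -> G) -> Prop)
    (I : finType) (a : I -> 'I_k.+1 -> G) :
  @large_pow G k m X -> #|I| <= m ->
  exists y, forall i, in_ltranslate (a i) X y.
Proof.
move=> largeX le_Im.
have [y Xy] := largeX (fun l => nth (fun _ => 1) [seq a i | i <- enum I] l).
exists y => i.
have lt_im : index i (enum I) < m.
  by apply: leq_trans le_Im; rewrite cardE index_mem mem_enum.
by have := Xy (Ordinal lt_im); rewrite /= (nth_map i) ?nth_index ?index_mem ?mem_enum.
Qed.

Lemma large_grid (G : groupType) (k s : nat) (c g : G) (T : nat -> seq G) :
  @large_pow G k (2 * s.+1 ^ k) (fun x => lcomm x = c) ->
  (forall n, 0 < n <= k -> size (T n) <= s.+1) ->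
  exists y : nat -> G,
    forall x, on_grid k T [:: y 0; g * y 0] y x -> lcomm_nat x k = c.
Proof.
move=> large size_T.
pose I : finType := (bool * {ffun 'I_k -> 'I_s.+1})%type.
pose t (u : I) (i : 'I_k.+1) : G :=
  if unlift ord0 i is Some n then nth 1 (T n.+1) (u.2 n) else if u.1 then g else 1.
have card_I : #|I| = (2 * s.+1 ^ k)%N by rewrite card_prod card_bool card_ffun !card_ord.
have [z Xz] := large_pow_fin (fun u i => (t u i)^-1) large (eq_leq card_I).
exists (fun n => z (inord n)) => x [x0 xT].
pose u : I := (x 0 != z (inord 0),
  [ffun n : 'I_k => inord (index (x n.+1 / z (inord n.+1)) (T n.+1))]).
rewrite -(Xz u) /lcomm; apply: eq_lcomm_nat => n le_nk; rewrite invgK /t.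
case: unliftP => [n' def_n|def_n];
  have := congr1 (@nat_of_ord _) def_n; rewrite ?lift0 inordK // => -> /=.
- have n'_k : 0 < n'.+1 <= k by rewrite ltn_ord.
  have xT_n' := xT _ n'_k; rewrite ffunE.
  by rewrite inordK ?nth_index ?mulgVK // (leq_trans _ (size_T _ n'_k)) ?index_mem.
- have [-> | ne] := eqVneq (x 0) (z (inord 0)); first by rewrite mul1g.
  by move: x0; rewrite !inE (negbTE ne) => /eqP.
Qed.

Lemma centralizer_family (G : groupType) (k s : nat) :
  (forall i, i < k -> exists A : seq G, size A <= s /\
     (forall x, upper_central i.+1 x <->
        (forall a, a \in A -> upper_central i [~ x, a]))) ->
  exists A : nat -> seq G, forall j, j < k -> size (A j) <= s /\
    forall x, (forall a, a \in A j -> upper_central j [~ x, a]) ->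
      upper_central j.+1 x.
Proof.
move=> centralizers.
have [Af Af_spec] := fin_all_exists (fun i : 'I_k => centralizers i (ltn_ord i)).
exists (fun j => if insub j is Some i then Af i else [::]) => j lt_jk.
rewrite insubT; have /= [size_Af center_Af] := Af_spec (Sub j lt_jk).
by split=> // x /center_Af.
Qed.

Theorem theorem5p13 (G : groupType) (k s : nat) (c : G) :
  (1 <= k)%N ->
  (forall i : nat, (i < k)%N ->
     exists A : seq G, (size A <= s)%N /\
       (forall x : G, upper_central i.+1 x <->
          (forall a : G, a \in A -> upper_central i (commg x a)))) ->
  @large_pow G k (2 * (s.+1) ^ k)%N (fun x : 'I_k.+1 -> G => lcomm x = c) ->
  c = 1 /\ (forall x : G, upper_central k x).
Proof.
(* The argument also covers k = 0, where it shows that G is trivial. *)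
move=> _ /(centralizer_family (s := s))[A A_spec] large.
pose T n := 1 :: A (k - n).
have size_T n : 0 < n <= k -> size (T n) <= s.+1.
  case/andP=> n_gt0 le_nk; rewrite ltnS (A_spec _ _).1 //.
  by rewrite ltn_subrL n_gt0 (leq_trans n_gt0).
have grid g := large_grid g large size_T.
have y_on_grid g y : on_grid k T [:: y 0; g * y 0] y y.
  by split=> [|n n_k]; rewrite ?mem_head // mulgV mem_head.
have central (g : G) : upper_central k g.
  have [y y_grid] := grid g.
  pose yg n := if n is 0 then g * y 0 else y n.
  have yg_grid : on_grid k T [:: y 0; g * y 0] y yg.
    split=> [|[|n] //= n_k]; first by rewrite !inE eqxx orbT.
    by rewrite mulgV mem_head.
  have center_A j (lt_jk : j < k) := (A_spec j lt_jk).2.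
  have := grid_lcomm_congr center_A y_grid (leqnn k) (y_on_grid g y) yg_grid.
  by rewrite subnn /= -conjgE => /(upper_centralJ (y 0)^-1); rewrite conjgK.
split=> //; have [y y_grid] := grid 1.
rewrite -(y_grid y (y_on_grid 1 y)).
by apply: (@upper_central_lcomm_nat _ _ _ 0); rewrite addn0.
Qed.
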